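(* Let $f(\mathbf{x})=\mathbf{x}^{T}A\mathbf{x}+b^{T}\mathbf{x}+1$ with $A\in\mathbb{R}^{n\times n}$ symmetric, $b\in\mathbb{R}^n$, $A\neq 0$, and suppose $f(\mathbf{x})=\det(I_k+x_1A_1+\dots+x_nA_n)$ for some $k\ge 2$ and Hermitian (or real symmetric) $k\times k$ matrices $A_1,\dots,A_n$. If $A$ is not negative semidefinite, then the spectrahedron $S=\{\mathbf{x}\in\mathbb{R}^n: I_k+\sum_j x_jA_j\succeq 0\}$ contains a full dimensional cone; more precisely, there exists $v\in\mathbb{R}^n$ with $\sum_j v_jA_j\succeq 0$ and $\operatorname{rank}(\sum_j v_jA_j)=2=\deg f$.
   Context: For $f(\mathbf{x})=\det(I+x_1A_1+\dots+x_nA_n)$ of degree $d$ and $S=\{\mathbf{x}: I+\sum_j x_jA_j\succeq 0\}$, the spectrahedron $S$ is said to contain a full dimensional cone if there exists $\mathbf{x}\in\mathbb{R}^n$ such that $L(\mathbf{x}):=x_1A_1+\dots+x_nA_n\succeq 0$ and $\operatorname{rank}L(\mathbf{x})=d$ (equivalently, the half ray $\{\lambda\mathbf{x}:\lambda\ge0\}$ lies in $S$ and $\operatorname{rank}L(\mathbf{x})=d$). *)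

(* Scalars live in a numeric closed field C (e.g. algC);
   "real" scalars are those with x \is Num.real.  Real symmetric matrices are
   the special case of Hermitian matrices with real entries. *)
From HB Require Import structures.
From mathcomp Require Import all_boot all_order all_algebra.
Set Implicit Arguments. Unset Strict Implicit. Unset Printing Implicit Defensive.
Import Order.TTheory GRing.Theory Num.Theory.
Local Open Scope ring_scope.

Definition ctrmx (C : numClosedFieldType) m n (M : 'M[C]_(m, n)) : 'M[C]_(n, m) :=
  \matrix_(i < n, j < m) (M j i)^*.

Definition hermitian_mx (C : numClosedFieldType) k (M : 'M[C]_k) : Prop :=
  ctrmx M = M.

Definition psd (C : numClosedFieldType) k (M : 'M[C]_k) : Prop :=
  hermitian_mx M /\ forall v : 'cV[C]_k, 0 <= (ctrmx v *m M *m v) 0 0.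

Definition real_mx (C : numClosedFieldType) m n (M : 'M[C]_(m, n)) : Prop :=
  forall i j, M i j \is Num.real.

Definition pencil (C : numClosedFieldType) n k (As : 'I_n -> 'M[C]_k)
  (x : 'cV[C]_n) : 'M[C]_k := \sum_(j < n) x j 0 *: As j.

Definition quadf (C : numClosedFieldType) n (A : 'M[C]_n) (b x : 'cV[C]_n) : C :=
  (x^T *m A *m x) 0 0 + (b^T *m x) 0 0 + 1.

Definition nsd_real (C : numClosedFieldType) n (A : 'M[C]_n) : Prop :=
  forall x : 'cV[C]_n, real_mx x -> (x^T *m A *m x) 0 0 <= 0.

From HB Require Import structures.
From mathcomp Require Import all_boot all_order all_algebra ring.
From mathcomp Require Import sesquilinear spectral.
From Stdlib Require Import Classical.
Set Implicit Arguments. Unset Strict Implicit. Unset Printing Implicit Defensive.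
Import Order.TTheory GRing.Theory Num.Theory Num.Def.
Local Open Scope ring_scope.

(* For real x, f(t x) = t^2 x^T A x + t b^T x + 1 equals det (I + t L(x)),
   which is prod_i (1 + t d_i) for the real eigenvalues d_i of the Hermitian
   matrix L(x).  Comparing degrees and leading coefficients, exactly two d_i are
   nonzero and their product is x^T A x.  Since A is not negative semidefinite
   we may take x^T A x > 0; then the two eigenvalues have the same sign, so
   L(x) or L(-x) = - L(x) is positive semidefinite of rank 2. *)

Lemma rank_diag_mx (F : fieldType) n (e : 'rV[F]_n) :
  \rank (diag_mx e) = #|[set i | e 0 i != 0]|.
Proof.
rewrite -sum1_card big_mkcond /=.
elim: n e => [|n IHn] e; first by rewrite flatmx0 mxrank0 big_ord0.
rewrite big_ord_recl -[diag_mx e]/(diag_mx (e : 'rV_(1 + n))).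
rewrite -(hsubmxK (e : 'rV_(1 + n))); move: (lsubmx _) (rsubmx _) => l r.
rewrite diag_mx_row (rank_diag_block_mx (diag_mx l)) IHn rank_rV !inE.
congr (_ + _)%N.
  rewrite mxE; case: splitP => [j _|//]; rewrite (ord1 j) [diag_mx l]mx11_scalar.
  rewrite !mxE eqxx mulr1n -scalemx1 scaler_eq0.
  rewrite (negbTE (matrix_nonzero1 _ _)) orbF.
  by case: (l 0 0 != 0).
apply: eq_bigr => i _; rewrite !inE mxE.
by case: splitP => [j /= + | j /= [] /val_inj ->] //; rewrite (ord1 j).
Qed.

Lemma eq_poly_natr (R : numDomainType) (p q : {poly R}) :
  (forall m : nat, p.[m%:R] = q.[m%:R]) -> p = q.
Proof.
move=> pq; apply/eqP; rewrite -subr_eq0; apply/eqP.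
apply: (@roots_geq_poly_eq0 _ _ [seq m%:R | m <- iota 0 (size (p - q))]).
- by apply/allP => _ /mapP [m _ ->]; rewrite /root hornerD hornerN pq subrr.
- by rewrite map_inj_uniq ?iota_uniq // => m m' /eqP; rewrite eqr_nat => /eqP.
- by rewrite size_map size_iota.
Qed.

Section LinearFactors.

Variables (R : idomainType) (I : finType) (c : I -> R).

Let S := [set i | c i != 0].

Lemma size_linear_poly (d : R) : size (d%:P * 'X + 1) = (d != 0).+1.
Proof. by rewrite -polyC1 size_MXaddC polyC_eq0 oner_eq0 andbF size_polyC. Qed.

Lemma prod_linear_poly_support :
  \prod_i ((c i)%:P * 'X + 1) = \prod_(i in S) ((c i)%:P * 'X + 1).
Proof.
rewrite (bigID (mem S)) /= [X in _ * X]big1 ?mulr1 // => i.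
by rewrite inE negbK => /eqP ->; rewrite mul0r add0r.
Qed.

Lemma size_prod_linear_poly : size (\prod_i ((c i)%:P * 'X + 1)) = #|S|.+1.
Proof.
rewrite prod_linear_poly_support size_prod => [|i _]; last first.
  by rewrite -size_poly_eq0 size_linear_poly.
rewrite (eq_bigr (fun=> 2%N)) => [|i]; last by rewrite inE size_linear_poly => ->.
by rewrite sum_nat_const muln2 -addnn -addSn; apply: addnK.
Qed.

Lemma lead_coef_prod_linear_poly :
  lead_coef (\prod_i ((c i)%:P * 'X + 1)) = \prod_(i in S) c i.
Proof.
rewrite prod_linear_poly_support lead_coef_prod; apply: eq_bigr => i.
rewrite inE => ci0; rewrite lead_coefDl ?lead_coefMX ?lead_coefC //.
by rewrite size_polyC oner_eq0 size_mulX ?polyC_eq0 // size_polyC ci0.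
Qed.

End LinearFactors.

Lemma support2_of_prod_linear_eq_quadratic (R : numDomainType) (I : finType)
    (c : I -> R) (a b : R) : a != 0 ->
  (forall m : nat, \prod_i (1 + m%:R * c i) = m%:R ^+ 2 * a + m%:R * b + 1) ->
  #|[set i | c i != 0]| = 2 /\ \prod_(i in [set i | c i != 0]) c i = a.
Proof.
move=> a0 eq_det; set q := Poly [:: 1; b; a].
have q_seq : q = [:: 1; b; a] :> seq R by apply: (@PolyK _ 0).
have prod_q : \prod_i ((c i)%:P * 'X + 1) = q.
  apply: eq_poly_natr => m; rewrite horner_prod horner_Poly /=.
  rewrite (eq_bigr (fun i => 1 + m%:R * c i)) => [|i _]; last first.
    by rewrite !hornerE addrC mulrC.
  by rewrite eq_det; ring.
split; first by have := @size_prod_linear_poly _ _ c; rewrite prod_q q_seq => -[].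
by rewrite -lead_coef_prod_linear_poly prod_q lead_coefE q_seq.
Qed.

Lemma support2_nneg_or_npos (R : numDomainType) (I : finType) (c : I -> R) :
  (forall i, c i \is Num.real) -> #|[set i | c i != 0]| = 2 ->
  0 < \prod_(i in [set i | c i != 0]) c i ->
  (forall i, 0 <= c i) \/ (forall i, c i <= 0).
Proof.
move=> c_real /eqP/cards2P[i [j [ij S_ij]]]; rewrite S_ij.
rewrite big_setU1 ?inE //= big_set1 => cij_gt0.
have supp l : c l != 0 -> (l == i) || (l == j).
  by move=> cl0; rewrite -in_set2 -S_ij inE.
have [ci_lt0|ci_gt0|ci0] := real_ltgtP (c_real i) (real0 _); last first.
- by move: cij_gt0; rewrite ci0 mul0r ltxx.
- have cj_gt0 : 0 < c j by rewrite -(pmulr_rgt0 _ ci_gt0).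
  left => l; have [-> //|/supp/orP[]/eqP-> //] := eqVneq (c l) 0; exact: ltW.
have cj_lt0 : c j < 0 by rewrite -(nmulr_rgt0 _ ci_lt0).
right => l; have [-> //|/supp/orP[]/eqP-> //] := eqVneq (c l) 0; exact: ltW.
Qed.

Lemma rank_conj_unitmx (F : fieldType) n (P A : 'M[F]_n) :
  P \in unitmx -> \rank (invmx P *m A *m P) = \rank A.
Proof.
move=> P_unit; rewrite mxrankMfree ?row_free_unit //.
by rewrite eqmxMfull // row_full_unit unitmx_inv.
Qed.

Lemma det_add1_conj_diag (F : fieldType) n (P : 'M[F]_n) (d : 'rV[F]_n) t :
  P \in unitmx ->
  \det (1%:M + t *: (invmx P *m diag_mx d *m P)) = \prod_i (1 + t * d 0 i).
Proof.
move=> P_unit.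
have -> : 1%:M + t *: (invmx P *m diag_mx d *m P) =
          invmx P *m diag_mx (\row_i (1 + t * d 0 i)) *m P.
  have -> : diag_mx (\row_i (1 + t * d 0 i)) = 1%:M + t *: diag_mx d.
    apply/matrixP => i j; rewrite !mxE.
    by case: eqVneq; rewrite ?mulr1n ?mulr0n ?mulr0 ?addr0.
  by rewrite mulmxDr mulmxDl mulmx1 mulVmx // -scalemxAr -scalemxAl.
rewrite !det_mulmx det_inv det_diag mulrAC mulVf -?unitfE -?unitmxE // mul1r.
by apply: eq_bigr => i _; rewrite mxE.
Qed.

Lemma ctrmxE (C : numClosedFieldType) m n (M : 'M[C]_(m, n)) :
  ctrmx M = map_mx conjC M^T.
Proof. by apply/matrixP => i j; rewrite !mxE. Qed.

Lemma psd_ctrmx_diag (C : numClosedFieldType) k (P : 'M[C]_k) (e : 'rV[C]_k) :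
  (forall i, 0 <= e 0 i) -> psd (ctrmx P *m diag_mx e *m P).
Proof.
move=> e_ge0; rewrite ctrmxE; split.
  rewrite /hermitian_mx ctrmxE !trmx_mul !map_mxM trmxCK tr_diag_mx.
  rewrite map_diag_mx mulmxA.
  congr (_ *m _ *m _); congr diag_mx; apply/matrixP => i j.
  by rewrite !mxE ord1; apply/conj_Creal/ger0_real.
move=> v; rewrite ctrmxE !mulmxA -map_mxM -trmx_mul -mulmxA mul_mx_diag mxE.
apply: sumr_ge0 => i _; rewrite !mxE -mulrA mulrCA -normCKC.
by rewrite mulr_ge0 ?exprn_ge0.
Qed.

Lemma hermitian_det_quadratic_psd_rank2 (C : numClosedFieldType) k
    (M : 'M[C]_k) (a b : C) :
  M \is hermsymmx -> 0 < a ->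
  (forall m : nat, \det (1%:M + m%:R *: M) = m%:R ^+ 2 * a + m%:R * b + 1) ->
  (psd M /\ \rank M = 2) \/ (psd (- M) /\ \rank (- M) = 2).
Proof.
move=> M_herm a_gt0 det_M.
set P := spectralmx M; set d := spectral_diag M.
have P_unitary : P \is unitarymx := spectral_unitarymx M.
have P_unit : P \in unitmx := spectral_unit M.
have M_spec : M = invmx P *m diag_mx d *m P.
  exact/orthomx_spectralP/hermitian_normalmx.
have d_real i : d 0 i \is Num.real.
  by have /mxOverP := hermitian_spectral_diag_real M_herm; apply.
have [supp_d prod_d] : #|[set i | d 0 i != 0]| = 2 /\
    \prod_(i in [set i | d 0 i != 0]) d 0 i = a.
  apply: (@support2_of_prod_linear_eq_quadratic _ _ _ a b (lt0r_neq0 a_gt0)) => m.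
  by rewrite -det_M M_spec det_add1_conj_diag.
have psd_rank2 (e : 'rV[C]_k) :
    (forall i, 0 <= e 0 i) -> #|[set i | e 0 i != 0]| = 2 ->
    psd (invmx P *m diag_mx e *m P) /\ \rank (invmx P *m diag_mx e *m P) = 2.
  move=> e_ge0 supp_e; rewrite rank_conj_unitmx // rank_diag_mx supp_e.
  by rewrite invmx_unitary // -ctrmxE; split => //; apply: psd_ctrmx_diag.
rewrite -prod_d in a_gt0.
have [d_ge0|d_le0] := support2_nneg_or_npos d_real supp_d a_gt0.
  by left; rewrite M_spec; apply: psd_rank2.
right; have -> : - M = invmx P *m diag_mx (- d) *m P.
  by rewrite M_spec -mulNmx -mulmxN; congr (_ *m _ *m _); rewrite linearN.
apply: psd_rank2 => [i|]; first by rewrite mxE oppr_ge0.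
by rewrite -supp_d; apply: eq_card => i; rewrite !inE mxE oppr_eq0.
Qed.

Lemma real_mxZ (C : numClosedFieldType) m n (t : C) (M : 'M[C]_(m, n)) :
  t \is Num.real -> real_mx M -> real_mx (t *: M).
Proof. by move=> t_real M_real i j; rewrite mxE rpredM. Qed.

Lemma real_quadratic_form (C : numClosedFieldType) n (A : 'M[C]_n) (x : 'cV[C]_n) :
  real_mx A -> real_mx x -> (x^T *m A *m x) 0 0 \is Num.real.
Proof.
move=> A_real x_real; rewrite !mxE; apply: rpred_sum => j _; rewrite !mxE.
by apply: rpredM => //; apply: rpred_sum => i _; rewrite !mxE rpredM.
Qed.

Lemma exists_real_quadratic_form_gt0 (C : numClosedFieldType) n (A : 'M[C]_n) :
  real_mx A -> ~ nsd_real A ->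
  exists2 x : 'cV[C]_n, real_mx x & 0 < (x^T *m A *m x) 0 0.
Proof.
move=> A_real not_nsd; apply: NNPP => no_x; apply: not_nsd => x x_real.
rewrite real_leNgt ?real0 ?real_quadratic_form //.
by apply/negP => xAx_gt0; apply: no_x; exists x.
Qed.

Lemma quadfZ (C : numClosedFieldType) n (A : 'M[C]_n) (b x : 'cV[C]_n) t :
  quadf A b (t *: x) = t ^+ 2 * (x^T *m A *m x) 0 0 + t * (b^T *m x) 0 0 + 1.
Proof.
rewrite /quadf linearZ /= [(t *: x)^T]linearZ /= -!scalemxAl linearZ /=.
by rewrite -scalemxAr !mxE mulrA expr2.
Qed.

Lemma pencilZ (C : numClosedFieldType) n k (As : 'I_n -> 'M[C]_k) x t :
  pencil As (t *: x) = t *: pencil As x.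
Proof.
by rewrite /pencil scaler_sumr; apply: eq_bigr => j _; rewrite mxE scalerA.
Qed.

Lemma pencil_hermsymmx (C : numClosedFieldType) n k (As : 'I_n -> 'M[C]_k) x :
  (forall j, hermitian_mx (As j)) -> real_mx x -> pencil As x \is hermsymmx.
Proof.
move=> As_herm x_real; apply/is_hermitianmxP; rewrite expr0 scale1r.
apply/matrixP => i j; rewrite !mxE !summxE rmorph_sum; apply: eq_bigr => l _.
rewrite !mxE rmorphM; congr (_ * _); first exact/esym/conj_Creal.
by have /matrixP/(_ i j) := As_herm l; rewrite mxE => <-.
Qed.

Theorem mainTheorem6 (C : numClosedFieldType) (n k : nat)
  (A : 'M[C]_n) (b : 'cV[C]_n) (As : 'I_n -> 'M[C]_k) :
  real_mx A -> A^T = A -> real_mx b -> A != 0 ->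
  (2 <= k)%N ->
  (forall j, hermitian_mx (As j)) ->
  (forall x : 'cV[C]_n, real_mx x ->
     quadf A b x = \det (1%:M + pencil As x)) ->
  ~ nsd_real A ->
  exists v : 'cV[C]_n, real_mx v /\ psd (pencil As v) /\ \rank (pencil As v) = 2%N.
Proof.
move=> A_real _ _ _ _ As_herm f_det not_nsd.
have [x x_real xAx_gt0] := exists_real_quadratic_form_gt0 A_real not_nsd.
have det_ray (m : nat) : \det (1%:M + m%:R *: pencil As x) =
    m%:R ^+ 2 * (x^T *m A *m x) 0 0 + m%:R * (b^T *m x) 0 0 + 1.
  by rewrite -quadfZ f_det ?pencilZ //; apply: real_mxZ; rewrite ?realn.
have [] := hermitian_det_quadratic_psd_rank2 (pencil_hermsymmx As_herm x_real)
  xAx_gt0 det_ray => -[psd_L rank_L]; first by exists x.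
exists (- x); rewrite -scaleN1r pencilZ !scaleN1r; split => // i j.
by rewrite mxE rpredN.
Qed.
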